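(* Let $a,b,c$ be nonzero and $G_1,G_2$ parameters, and define the transformation (a Dehn twist, obtained as a composition of two generalized mutations) $$a'=\frac{b^2+c^2+G_1bc}{a},\qquad b'=\frac{(a')^2+c^2+G_2a'c}{b},\qquad c'=c.$$ Then the function $$G_\gamma=G_2\frac{c}{b}+G_1\frac{c}{a}+\frac{a}{b}+\frac{b}{a}+\frac{c^2}{ab}$$ is preserved by this transformation, i.e. $G_\gamma(a',b',c)=G_\gamma(a,b,c)$.
   Context: Here $a,b,c$ are $\lambda$-lengths of arcs on a Riemann sphere with three holes and two bordered cusps on one hole ($PV$ case), $G_1,G_2$ encode the perimeters of the two uncusped holes, and $G_\gamma$ is the geodesic function of the closed geodesic $\gamma$ encircling these two holes. The claim is an identity of rational functions. *)

From mathcomp Require Import all_boot all_algebra.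
Set Implicit Arguments. Unset Strict Implicit. Unset Printing Implicit Defensive.
Import GRing.Theory.
Local Open Scope ring_scope.

Definition Ggamma (F : fieldType) (G1 G2 a b c : F) : F :=
  G2 * (c / b) + G1 * (c / a) + a / b + b / a + c ^+ 2 / (a * b).

Definition twist_a (F : fieldType) (G1 a b c : F) : F :=
  (b ^+ 2 + c ^+ 2 + G1 * b * c) / a.
Definition twist_b (F : fieldType) (G1 G2 a b c : F) : F :=
  let a' := twist_a G1 a b c in (a' ^+ 2 + c ^+ 2 + G2 * a' * c) / b.

From mathcomp Require Import all_boot all_algebra.
From mathcomp Require Import ring.
Import GRing.Theory.
Set Implicit Arguments. Unset Strict Implicit. Unset Printing Implicit Defensive.
Local Open Scope ring_scope.

(* Each mutation is an exchange relation [a a' = b^2 + c^2 + G1 b c]; using it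
   to cancel the numerator of [Ggamma] linearises it as
   [Ggamma a b c = (a + a' + G2 c) / b].  Since [Ggamma] is symmetric under
   swapping [(a, G1)] with [(b, G2)], the second mutation [b b' = a'^2 + c^2 + G2 a' c]
   gives [Ggamma a' b' c = (b' + b + G1 c) / a'], and cross-multiplying, the two
   expressions agree once both exchange relations are substituted. *)

Section Geodesic.

Variable F : fieldType.
Implicit Types a b c x : F.

Lemma GgammaC (G1 G2 : F) a b c : Ggamma G1 G2 a b c = Ggamma G2 G1 b a c.
Proof. by rewrite /Ggamma [b * a]mulrC; ring. Qed.

Lemma Ggamma_exchange (G1 G2 : F) a b c x :
    a != 0 -> b != 0 -> a * x = b ^+ 2 + c ^+ 2 + G1 * b * c ->
  Ggamma G1 G2 a b c = (a + x + G2 * c) / b.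
Proof.
move=> a_neq0 b_neq0 exch.
have -> : Ggamma G1 G2 a b c = (G2 * c * a + a ^+ 2 + (b ^+ 2 + c ^+ 2 + G1 * b * c)) / (a * b).
  by rewrite /Ggamma; field; apply/andP.
by rewrite -exch; field; apply/andP.
Qed.

Lemma twist_a_exchange (G1 : F) a b c :
  a != 0 -> a * twist_a G1 a b c = b ^+ 2 + c ^+ 2 + G1 * b * c.
Proof. by move=> a_neq0; rewrite /twist_a mulrC divfK. Qed.

Lemma twist_b_exchange (G1 G2 : F) a b c : b != 0 ->
  twist_b G1 G2 a b c * b =
    twist_a G1 a b c ^+ 2 + c ^+ 2 + G2 * twist_a G1 a b c * c.
Proof. by move=> b_neq0; rewrite /twist_b divfK. Qed.

End Geodesic.

Theorem mainTheorem10 (F : fieldType) (G1 G2 a b c : F) :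
  a != 0 -> b != 0 -> c != 0 ->
  twist_a G1 a b c != 0 -> twist_b G1 G2 a b c != 0 ->
  Ggamma G1 G2 (twist_a G1 a b c) (twist_b G1 G2 a b c) c = Ggamma G1 G2 a b c.
Proof.
move=> a_neq0 b_neq0 _ a'_neq0 b'_neq0.
have exch_a := twist_a_exchange G1 b c a_neq0.
have exch_b := twist_b_exchange G1 G2 a c b_neq0.
move: a'_neq0 b'_neq0 exch_a exch_b.
set a' := twist_a G1 a b c; set b' := twist_b G1 G2 a b c.
move=> a'_neq0 b'_neq0 exch_a exch_b.
rewrite GgammaC (Ggamma_exchange G1 b'_neq0 a'_neq0 exch_b).
rewrite (Ggamma_exchange G2 a_neq0 b_neq0 exch_a).
apply/eqP; rewrite eqr_div //; apply/eqP.
have -> : (b' + b + G1 * c) * b = b' * b + b ^+ 2 + G1 * b * c by ring.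
have -> : (a + a' + G2 * c) * a' = a * a' + a' ^+ 2 + G2 * a' * c by ring.
by rewrite exch_a exch_b; ring.
Qed.
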